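(* Let $G=(V,E)$ be a $2$-edge-strongly biconnected directed graph with $n=|V|$, and let $U\subseteq E$ be an optimal solution of the minimum $2$-edge-strongly biconnected spanning subgraph problem on $G$, i.e. $U$ is a minimum-size subset of $E$ such that $(V,U)$ is $2$-edge-strongly biconnected. Then $(V,U)$ has at least $2n$ edges.
   Context: A directed graph is strongly biconnected if it is strongly connected and its underlying undirected graph (ignoring edge directions) is biconnected. A strongly biconnected directed graph $G=(V,E)$ is $2$-edge-strongly biconnected if it has at least three vertices and $(V,E\setminus\{e\})$ is strongly biconnected for every $e\in E$. *)

From mathcomp Require Import all_boot.
Set Implicit Arguments. Unset Strict Implicit. Unset Printing Implicit Defensive.

(* A directed graph on the finite vertex type V is given by its edge set
   E : {set V * V}; the pair (x, y) is the edge x -> y. *)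

Definition darc (V : finType) (E : {set V * V}) : rel V :=
  fun x y => (x, y) \in E.

Definition uarc (V : finType) (E : {set V * V}) : rel V :=
  fun x y => ((x, y) \in E) || ((y, x) \in E).

Definition strongly_connected (V : finType) (E : {set V * V}) : Prop :=
  forall x y : V, connect (darc E) x y.

Definition uconnected (V : finType) (E : {set V * V}) : Prop :=
  forall x y : V, connect (uarc E) x y.

Definition uarc_del (V : finType) (E : {set V * V}) (v : V) : rel V :=
  fun x y => [&& x != v, y != v & uarc E x y].

Definition biconnected (V : finType) (E : {set V * V}) : Prop :=
  uconnected E /\
  forall v x y : V, x != v -> y != v -> connect (uarc_del E v) x y.

Definition strongly_biconnected (V : finType) (E : {set V * V}) : Prop :=
  strongly_connected E /\ biconnected E.

Definition two_edge_strongly_biconnected (V : finType) (E : {set V * V}) : Prop :=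
  [/\ strongly_biconnected E, 3 <= #|V| & forall e, e \in E -> strongly_biconnected (E :\ e)].

From mathcomp Require Import all_boot.
Set Implicit Arguments. Unset Strict Implicit. Unset Printing Implicit Defensive.

(* Every vertex of a 2-edge-strongly biconnected graph has out-degree at least 2:
   strong connectivity gives an edge leaving v, and strong connectivity after
   deleting that edge gives a second one. Summing out-degrees over all vertices
   counts every edge exactly once, so there are at least 2n edges. *)

Lemma connect_neq_step (T : finType) (r : rel T) (x y : T) :
  connect r x y -> x != y -> exists z, r x z.
Proof.
case/connectP=> [[|z p] /= rp ->]; first by rewrite eqxx.
by case/andP: rp => rxz _ _; exists z.
Qed.

Lemma exists_neq (V : finType) (v : V) : 1 < #|V| -> exists y, y != v.
Proof.
move=> V_gt1; have : 0 < #|[set~ v]| by rewrite cardsC1 -ltnS prednK // ltnW.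
by case/card_gt0P=> y; rewrite in_setC1; exists y.
Qed.

Lemma strongly_connected_out_edge (V : finType) (F : {set V * V}) (v : V) :
  1 < #|V| -> strongly_connected F -> exists z, (v, z) \in F.
Proof.
move=> V_gt1 scF; have [y yv] := exists_neq v V_gt1.
by apply: (connect_neq_step (scF v y)); rewrite eq_sym.
Qed.

Definition out_edges (V : finType) (F : {set V * V}) (v : V) : {set V * V} :=
  [set e in F | e.1 == v].

Lemma card_out_edges_ge2 (V : finType) (F : {set V * V}) (v : V) :
  1 < #|V| -> strongly_connected F ->
  (forall e, e \in F -> strongly_connected (F :\ e)) ->
  1 < #|out_edges F v|.
Proof.
move=> V_gt1 scF scFD.
have [z vzF] := strongly_connected_out_edge v V_gt1 scF.
have [w] := strongly_connected_out_edge v V_gt1 (scFD _ vzF).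
rewrite in_setD1 => /andP[vw_neq vwF].
apply/card_gt1P; exists (v, z), (v, w).
by rewrite !inE vzF vwF eqxx eq_sym.
Qed.

Lemma sum_card_out_edges (V : finType) (F : {set V * V}) :
  \sum_(v : V) #|out_edges F v| = #|F|.
Proof.
rewrite -sum1_card (partition_big fst predT) //=.
by apply: eq_bigr => v _; rewrite -sum1_card; apply: eq_bigl => e; rewrite inE.
Qed.

Lemma two_edge_strongly_biconnected_card (V : finType) (F : {set V * V}) :
  two_edge_strongly_biconnected F -> 2 * #|V| <= #|F|.
Proof.
case=> [[scF _] V_ge3 scFD].
rewrite -sum_card_out_edges mulnC -sum_nat_const; apply: leq_sum => v _.
by apply: card_out_edges_ge2 (ltnW V_ge3) scF _ => e /scFD [].
Qed.

Theorem mainTheorem3 (V : finType) (E U : {set V * V}) :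
  two_edge_strongly_biconnected E ->
  U \subset E ->
  two_edge_strongly_biconnected U ->
  (forall U' : {set V * V}, U' \subset E -> two_edge_strongly_biconnected U' ->
     #|U| <= #|U'|) ->
  2 * #|V| <= #|U|.
Proof. by move=> _ _ /two_edge_strongly_biconnected_card. Qed.
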